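(* Let $\mathcal{V}$ and $\mathcal{W}$ be quaternionic two-sided Banach algebras with unit $1\neq 0$, let $\mathcal{A}:\mathcal{V}\to\mathcal{W}$ be a homomorphism, and let $a,b\in\mathcal{V}$. (1) If $ab\in Pr(\Phi_{\mathcal{A}})$ and $ba\in Pr(\Phi_{\mathcal{A}})$, then $$\sigma_{S,\mathcal{A}}^{\Phi}(a+b)\setminus\{0\}=\left[\sigma_{S,\mathcal{A}}^{\Phi}(a)\cup\sigma_{S,\mathcal{A}}^{\Phi}(b)\right]\setminus\{0\}.$$ (2) If $ab\in \mathcal{A}^{-1}(0)$ and $ba\in \mathcal{A}^{-1}(0)$, then $$\sigma_{S,\mathcal{A}}^{\Phi^{0}}(a+b)\setminus\{0\}\subset\left[\sigma_{S,\mathcal{A}}^{\Phi^{0}}(a)\cup\sigma_{S,\mathcal{A}}^{\Phi^{0}}(b)\right]\setminus\{0\},$$ and if, further, $\sigma_{S,\mathcal{A}}^{\Phi^{0}}(a)=\sigma_{S,\mathcal{A}}^{\Phi}(a)$, then $$\sigma_{S,\mathcal{A}}^{\Phi^{0}}(a+b)\setminus\{0\}=\left[\sigma_{S,\mathcal{A}}^{\Phi^{0}}(a)\cup\sigma_{S,\mathcal{A}}^{\Phi^{0}}(b)\right]\setminus\{0\}.$$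
   Context: $\mathbb{H}$ denotes the quaternions; for $q\in\mathbb{H}$, $Re(q)$ is its real part and $|q|$ its norm. A quaternionic two-sided Banach algebra with unit is a two-sided $\mathbb{H}$-vector space $\mathcal{V}$ with an associative product satisfying $x(y+z)=xy+xz$, $(x+y)z=xz+yz$, $q(xy)=(qx)y$, $(xy)q=x(yq)$ for $x,y,z\in\mathcal{V}$, $q\in\mathbb{H}$, complete with respect to a norm satisfying $\|qx\|=|q|\|x\|=\|xq\|$ and $\|xy\|\le\|x\|\|y\|$, with a unit $1_{\mathcal{V}}$, $\|1_{\mathcal{V}}\|=1$. A homomorphism $\mathcal{A}:\mathcal{V}\to\mathcal{W}$ satisfies $\mathcal{A}(u+v)=\mathcal{A}(u)+\mathcal{A}(v)$, $\mathcal{A}(uv)=\mathcal{A}(u)\mathcal{A}(v)$, $\mathcal{A}(qu)=q\mathcal{A}(u)$, $\mathcal{A}(uq)=\mathcal{A}(u)q$, $\mathcal{A}(1_{\mathcal{V}})=1_{\mathcal{W}}$. $\mathcal{V}^{-1},\mathcal{W}^{-1}$ denote the groups of invertible elements. For $v\in\mathcal{V}$ and $q\in\mathbb{H}$ put $R_q(v)=v^2-2Re(q)v+|q|^2 1_{\mathcal{V}}$. Define $\Phi_{\mathcal{A}}=\{v\in\mathcal{V}:\mathcal{A}(v)\in\mathcal{W}^{-1}\}$ (Fredholm elements), $\Phi_{\mathcal{A}}^0=\mathcal{V}^{-1}+\mathcal{A}^{-1}(0)$ (Weyl elements), $Pr(\Phi_{\mathcal{A}})=\{p\in\mathcal{V}: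 p+t\in\Phi_{\mathcal{A}}\ \forall t\in\Phi_{\mathcal{A}}\}$ (Fredholm perturbations). The Fredholm S-spectrum is $\sigma_{S,\mathcal{A}}^{\Phi}(v)=\{q\in\mathbb{H}: R_q(v)\notin\Phi_{\mathcal{A}}\}$ and the Weyl S-spectrum is $\sigma_{S,\mathcal{A}}^{\Phi^0}(v)=\{q\in\mathbb{H}: R_q(v)\notin\Phi_{\mathcal{A}}^0\}$. *)

From Stdlib Require Import Reals.
Open Scope R_scope.

Record quat : Type := mkQ { q0 : R; q1 : R; q2 : R; q3 : R }.

Definition Qadd (p q : quat) : quat :=
  mkQ (q0 p + q0 q) (q1 p + q1 q) (q2 p + q2 q) (q3 p + q3 q).

Definition Qmul (p q : quat) : quat :=
  mkQ (q0 p * q0 q - q1 p * q1 q - q2 p * q2 q - q3 p * q3 q)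
      (q0 p * q1 q + q1 p * q0 q + q2 p * q3 q - q3 p * q2 q)
      (q0 p * q2 q - q1 p * q3 q + q2 p * q0 q + q3 p * q1 q)
      (q0 p * q3 q + q1 p * q2 q - q2 p * q1 q + q3 p * q0 q).

Definition Qzero : quat := mkQ 0 0 0 0.
Definition Qone : quat := mkQ 1 0 0 0.
Definition Qreal (r : R) : quat := mkQ r 0 0 0.
Definition Qre (q : quat) : R := q0 q.
Definition Qnorm (q : quat) : R :=
  sqrt (q0 q * q0 q + q1 q * q1 q + q2 q * q2 q + q3 q * q3 q).

Record QBA : Type := {
  car : Type;
  vadd : car -> car -> car;
  vzero : car;
  vopp : car -> car;
  vmul : car -> car -> car;
  vone : car;
  lsc : quat -> car -> car;
  rsc : car -> quat -> car;
  vnorm : car -> R;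
  vaddA : forall x y z, vadd x (vadd y z) = vadd (vadd x y) z;
  vaddC : forall x y, vadd x y = vadd y x;
  vadd0 : forall x, vadd x vzero = x;
  vaddN : forall x, vadd x (vopp x) = vzero;
  lsc_addq : forall p q x, lsc (Qadd p q) x = vadd (lsc p x) (lsc q x);
  lsc_addv : forall p x y, lsc p (vadd x y) = vadd (lsc p x) (lsc p y);
  lsc_mul : forall p q x, lsc (Qmul p q) x = lsc p (lsc q x);
  lsc_one : forall x, lsc Qone x = x;
  rsc_addq : forall x p q, rsc x (Qadd p q) = vadd (rsc x p) (rsc x q);
  rsc_addv : forall x y p, rsc (vadd x y) p = vadd (rsc x p) (rsc y p);
  rsc_mul : forall x p q, rsc x (Qmul p q) = rsc (rsc x p) q;
  rsc_one : forall x, rsc x Qone = x;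
  lsc_rsc : forall p x q, rsc (lsc p x) q = lsc p (rsc x q);
  vmulA : forall x y z, vmul x (vmul y z) = vmul (vmul x y) z;
  vmulDr : forall x y z, vmul x (vadd y z) = vadd (vmul x y) (vmul x z);
  vmulDl : forall x y z, vmul (vadd x y) z = vadd (vmul x z) (vmul y z);
  lsc_vmul : forall q x y, lsc q (vmul x y) = vmul (lsc q x) y;
  rsc_vmul : forall x y q, rsc (vmul x y) q = vmul x (rsc y q);
  vmul1l : forall x, vmul vone x = x;
  vmul1r : forall x, vmul x vone = x;
  vnorm_ge0 : forall x, 0 <= vnorm x;
  vnorm_eq0 : forall x, vnorm x = 0 -> x = vzero;
  vnorm0 : vnorm vzero = 0;
  vnorm_triangle : forall x y, vnorm (vadd x y) <= vnorm x + vnorm y;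
  vnorm_lsc : forall q x, vnorm (lsc q x) = Qnorm q * vnorm x;
  vnorm_rsc : forall x q, vnorm (rsc x q) = Qnorm q * vnorm x;
  vnorm_mul : forall x y, vnorm (vmul x y) <= vnorm x * vnorm y;
  vnorm_one : vnorm vone = 1;
  vcomplete : forall u : nat -> car,
    (forall eps, 0 < eps -> exists N, forall m n, (N <= m)%nat -> (N <= n)%nat ->
        vnorm (vadd (u m) (vopp (u n))) < eps) ->
    exists l, forall eps, 0 < eps -> exists N, forall n, (N <= n)%nat ->
        vnorm (vadd (u n) (vopp l)) < eps
}.

Arguments vadd {_}. Arguments vzero {_}. Arguments vopp {_}. Arguments vmul {_}.
Arguments vone {_}. Arguments lsc {_}. Arguments rsc {_}. Arguments vnorm {_}.

Definition is_hom (V W : QBA) (A : car V -> car W) : Prop :=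
  (forall u v, A (vadd u v) = vadd (A u) (A v)) /\
  (forall u v, A (vmul u v) = vmul (A u) (A v)) /\
  (forall q u, A (lsc q u) = lsc q (A u)) /\
  (forall u q, A (rsc u q) = rsc (A u) q) /\
  A vone = vone.

Definition invertible {V : QBA} (x : car V) : Prop :=
  exists y, vmul x y = vone /\ vmul y x = vone.

Definition Rq {V : QBA} (q : quat) (v : car V) : car V :=
  vadd (vadd (vmul v v) (vopp (lsc (Qreal (2 * Qre q)) v)))
       (lsc (Qreal (Qnorm q ^ 2)) vone).

Section Fred.
Context {V W : QBA} (A : car V -> car W).

Definition Fredholm (v : car V) : Prop := invertible (A v).
Definition Weyl (v : car V) : Prop :=
  exists u k, invertible u /\ A k = vzero /\ v = vadd u k.
Definition FredPert (p : car V) : Prop :=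
  forall t, Fredholm t -> Fredholm (vadd p t).
Definition fred_spec (v : car V) (q : quat) : Prop := ~ Fredholm (Rq q v).
Definition weyl_spec (v : car V) (q : quat) : Prop := ~ Weyl (Rq q v).
End Fred.

(* Put s = 2 Re q and n = |q|^2, so that R_q(v) = v^2 - s v + n.  If ab and ba
   lie in a two-sided ideal I, expanding the product shows
   R_q(a) R_q(b) = n R_q(a + b) = R_q(b) R_q(a) modulo I, and n <> 0 when
   q <> 0.  Both A^{-1}(0) and Pr(Phi_A) are such ideals, the latter because
   every element is a sum of two invertibles (Neumann series) and perturbations
   are stable under multiplication by invertibles.  Since xy and yx Fredholm
   force x Fredholm, (1) follows.  For (2), Weyl elements are closed under
   products and kernel perturbations; conversely, if R_q(a + b) is Weyl then
   R_q(a) is Fredholm by (1), hence Weyl by hypothesis, and u R_q(b) Weyl with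
   u invertible forces R_q(b) Weyl. *)

From Stdlib Require Import Reals Lra Lia ZArith Setoid Classical.
Open Scope R_scope.

Section Algebra.
Context {U : QBA}.
Implicit Types x y z : car U.

Lemma vadd0l x : vadd vzero x = x.
Proof. rewrite vaddC; apply vadd0. Qed.

Lemma vaddNl x : vadd (vopp x) x = vzero.
Proof. rewrite vaddC; apply vaddN. Qed.

Lemma vaddI z x y : vadd z x = vadd z y -> x = y.
Proof.
  intro H. rewrite <- (vadd0l x), <- (vadd0l y), <- (vaddNl z), <- !vaddA, H; auto.
Qed.

Lemma vopp_unique x y : vadd x y = vzero -> y = vopp x.
Proof. intro H. apply (vaddI x). rewrite H, vaddN; auto. Qed.

Lemma voppK x : vopp (vopp x) = x.
Proof. symmetry; apply vopp_unique, vaddNl. Qed.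

Lemma vopp0 : vopp (@vzero U) = vzero.
Proof. symmetry; apply vopp_unique, vadd0. Qed.

Lemma voppD x y : vopp (vadd x y) = vadd (vopp x) (vopp y).
Proof.
  symmetry; apply vopp_unique.
  rewrite (vaddC _ (vopp x)), vaddA, <- (vaddA _ x), vaddN, vadd0, vaddN; auto.
Qed.

Lemma voppB x y : vopp (vadd x (vopp y)) = vadd y (vopp x).
Proof. rewrite voppD, voppK, vaddC; auto. Qed.

Lemma vaddK x y : vadd (vadd x y) (vopp y) = x.
Proof. rewrite <- vaddA, vaddN, vadd0; auto. Qed.

Lemma vaddNK x y : vadd (vadd x (vopp y)) y = x.
Proof. rewrite <- vaddA, vaddNl, vadd0; auto. Qed.

Lemma vsub_eq0 x y : vadd x (vopp y) = vzero -> x = y.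
Proof. intro H. rewrite <- (voppK y). apply vopp_unique. rewrite vaddC; auto. Qed.

Lemma vsub_split x y z : vadd x (vopp z) = vadd (vadd x (vopp y)) (vadd y (vopp z)).
Proof. rewrite <- vaddA, (vaddA _ (vopp y)), vaddNl, vadd0l; auto. Qed.

Lemma vaddACA x y z t : vadd (vadd x y) (vadd z t) = vadd (vadd x z) (vadd y t).
Proof.
  rewrite <- !vaddA. f_equal. rewrite !vaddA. f_equal. apply vaddC.
Qed.

Lemma vadd_idem x : vadd x x = x -> x = vzero.
Proof. intro H. apply (vaddI x). rewrite H, vadd0; auto. Qed.

Lemma vmulr0 x : vmul x vzero = vzero.
Proof. apply vadd_idem. rewrite <- vmulDr, vadd0; auto. Qed.

Lemma vmul0r x : vmul vzero x = vzero.
Proof. apply vadd_idem. rewrite <- vmulDl, vadd0; auto. Qed.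

Lemma vmulNr x y : vmul (vopp x) y = vopp (vmul x y).
Proof. apply vopp_unique. rewrite <- vmulDl, vaddN, vmul0r; auto. Qed.

Lemma vmulrN x y : vmul x (vopp y) = vopp (vmul x y).
Proof. apply vopp_unique. rewrite <- vmulDr, vaddN, vmulr0; auto. Qed.

Lemma vnorm_approx0 x : (forall eps, 0 < eps -> vnorm x < eps) -> x = vzero.
Proof.
  intro H. apply vnorm_eq0. pose proof (vnorm_ge0 _ x).
  destruct (Req_dec (vnorm x) 0) as [e|n]; auto.
  specialize (H (vnorm x)). lra.
Qed.

End Algebra.

Lemma Qadd_real r s : Qadd (Qreal r) (Qreal s) = Qreal (r + s).
Proof. unfold Qadd, Qreal; simpl; f_equal; ring. Qed.

Lemma Qmul_real r s : Qmul (Qreal r) (Qreal s) = Qreal (r * s).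
Proof. unfold Qmul, Qreal; simpl; f_equal; ring. Qed.

Lemma Qnorm_real r : Qnorm (Qreal r) = Rabs r.
Proof.
  unfold Qnorm, Qreal; simpl. rewrite <- sqrt_Rsqr_abs. f_equal. unfold Rsqr; ring.
Qed.

Lemma Qnorm_sqr_neq0 q : q <> Qzero -> Qnorm q ^ 2 <> 0.
Proof.
  destruct q as [x0 x1 x2 x3]. unfold Qnorm. simpl q0; simpl q1; simpl q2; simpl q3.
  intros hq. rewrite pow2_sqrt by nra. intro h. apply hq.
  assert (x0 = 0) by nra. assert (x1 = 0) by nra.
  assert (x2 = 0) by nra. assert (x3 = 0) by nra.
  subst; reflexivity.
Qed.

Section RealScalars.
Context {U : QBA}.
Implicit Types x y : car U.

Lemma lsc_v0 q : lsc q (@vzero U) = vzero.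
Proof. apply vadd_idem. rewrite <- lsc_addv, vadd0; auto. Qed.

Lemma lscN q x : lsc q (vopp x) = vopp (lsc q x).
Proof. apply vopp_unique. rewrite <- lsc_addv, vaddN, lsc_v0; auto. Qed.

Lemma lsc_real0 x : lsc (Qreal 0) x = vzero.
Proof. apply vadd_idem. rewrite <- lsc_addq, Qadd_real, Rplus_0_r; auto. Qed.

Lemma lsc_realD r s x : lsc (Qreal (r + s)) x = vadd (lsc (Qreal r) x) (lsc (Qreal s) x).
Proof. rewrite <- Qadd_real, lsc_addq; auto. Qed.

Lemma lsc_realM r s x : lsc (Qreal (r * s)) x = lsc (Qreal r) (lsc (Qreal s) x).
Proof. rewrite <- Qmul_real, lsc_mul; auto. Qed.

Lemma lsc_realN r x : lsc (Qreal (- r)) x = vopp (lsc (Qreal r) x).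
Proof.
  apply vopp_unique. rewrite <- lsc_realD, Rplus_opp_r. apply lsc_real0.
Qed.

Lemma vopp_lsc x : vopp x = lsc (Qreal (- (1))) x.
Proof. rewrite lsc_realN; unfold Qreal; rewrite lsc_one; auto. Qed.

Lemma lsc_realK r x : r <> 0 -> lsc (Qreal (/ r)) (lsc (Qreal r) x) = x.
Proof. intro hr. rewrite <- lsc_realM, Rinv_l by exact hr. apply lsc_one. Qed.

Lemma vnorm_opp x : vnorm (vopp x) = vnorm x.
Proof. rewrite vopp_lsc, vnorm_lsc, Qnorm_real, Rabs_Ropp, Rabs_R1; ring. Qed.

Lemma vnorm_lsc_real r x : vnorm (lsc (Qreal r) x) = Rabs r * vnorm x.
Proof. rewrite vnorm_lsc, Qnorm_real; auto. Qed.

Lemma rsc_real0 x : rsc x (Qreal 0) = vzero.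
Proof. apply vadd_idem. rewrite <- rsc_addq, Qadd_real, Rplus_0_r; auto. Qed.

Lemma rsc_realD r s x : rsc x (Qreal (r + s)) = vadd (rsc x (Qreal r)) (rsc x (Qreal s)).
Proof. rewrite <- Qadd_real, rsc_addq; auto. Qed.

Lemma rsc_realN r x : rsc x (Qreal (- r)) = vopp (rsc x (Qreal r)).
Proof.
  apply vopp_unique. rewrite <- rsc_realD, Rplus_opp_r. apply rsc_real0.
Qed.

Lemma lsc_rsc_nat (k : nat) x : lsc (Qreal (INR k)) x = rsc x (Qreal (INR k)).
Proof.
  induction k as [|k IH].
  - rewrite lsc_real0, rsc_real0; auto.
  - rewrite S_INR, lsc_realD, rsc_realD, IH. unfold Qreal at 2 4.
    rewrite lsc_one, rsc_one; auto.
Qed.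

Lemma lsc_rsc_Z (m : Z) x : lsc (Qreal (IZR m)) x = rsc x (Qreal (IZR m)).
Proof.
  destruct (Z_le_gt_dec 0 m) as [h|h].
  - rewrite <- (Z2Nat.id m h), <- INR_IZR_INZ. apply lsc_rsc_nat.
  - replace (IZR m) with (- INR (Z.to_nat (- m))).
    + rewrite lsc_realN, rsc_realN, lsc_rsc_nat; auto.
    + rewrite INR_IZR_INZ, Z2Nat.id by lia. rewrite opp_IZR; ring.
Qed.

Definition lsc_rsc_defect r x := vadd (lsc (Qreal r) x) (vopp (rsc x (Qreal r))).

Lemma lsc_rsc_defectD r s x :
  lsc_rsc_defect (r + s) x = vadd (lsc_rsc_defect r x) (lsc_rsc_defect s x).
Proof. unfold lsc_rsc_defect. rewrite lsc_realD, rsc_realD, voppD. apply vaddACA. Qed.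

Lemma lsc_rsc_defect_Z (m : Z) x : lsc_rsc_defect (IZR m) x = vzero.
Proof. unfold lsc_rsc_defect. rewrite lsc_rsc_Z, vaddN; auto. Qed.

Lemma lsc_rsc_defect_natM (N : nat) r x :
  lsc_rsc_defect (INR N * r) x = lsc (Qreal (INR N)) (lsc_rsc_defect r x).
Proof.
  unfold lsc_rsc_defect. rewrite lsc_addv, lscN, lsc_realM. f_equal. f_equal.
  rewrite Rmult_comm, <- Qmul_real, rsc_mul, lsc_rsc_nat; auto.
Qed.

Lemma vnorm_lsc_rsc_defect r x : vnorm (lsc_rsc_defect r x) <= 2 * Rabs r * vnorm x.
Proof.
  unfold lsc_rsc_defect. eapply Rle_trans; [apply vnorm_triangle|].
  rewrite vnorm_opp, vnorm_lsc_real, vnorm_rsc, Qnorm_real. lra.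
Qed.

(* The defect is additive in [r], vanishes on integers and is bounded by
   [2 |r| |x|], so [N |defect r| = |defect (N r - k)| <= 2 |x|] for an integer
   [k] within 1 of [N r]. *)Lemma lsc_rsc_real r x : lsc (Qreal r) x = rsc x (Qreal r).
Proof.
  apply vsub_eq0, vnorm_approx0. fold (lsc_rsc_defect r x). intros eps Heps.
  pose proof (vnorm_ge0 _ x) as hx.
  destruct (INR_archimed eps (2 * vnorm x) Heps) as [N HN].
  assert (HNp : 0 < INR N).
  { destruct N; [simpl in HN; lra | apply lt_0_INR; lia]. }
  set (k := (up (INR N * r) - 1)%Z).
  destruct (archimed (INR N * r)) as [h1 h2].
  assert (Hk : Rabs (INR N * r - IZR k) <= 1).
  { unfold k. rewrite minus_IZR. apply Rabs_le. lra. }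
  assert (E : INR N * vnorm (lsc_rsc_defect r x) <= 2 * vnorm x).
  { rewrite <- (Rabs_pos_eq (INR N)) by lra.
    rewrite <- vnorm_lsc_real, <- lsc_rsc_defect_natM.
    replace (INR N * r) with ((INR N * r - IZR k) + IZR k) by ring.
    rewrite lsc_rsc_defectD, lsc_rsc_defect_Z, vadd0.
    eapply Rle_trans; [apply vnorm_lsc_rsc_defect|]. nra. }
  pose proof (vnorm_ge0 _ (lsc_rsc_defect r x)). nra.
Qed.

Lemma vmul_lsc_real r x y : vmul x (lsc (Qreal r) y) = lsc (Qreal r) (vmul x y).
Proof. rewrite !lsc_rsc_real. symmetry; apply rsc_vmul. Qed.

End RealScalars.

Section Neumann.
Context {U : QBA}.
Implicit Types x y : car U.

Definition cauchy (u : nat -> car U) : Prop :=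
  forall eps, 0 < eps -> exists N, forall m n, (N <= m)%nat -> (N <= n)%nat ->
    vnorm (vadd (u m) (vopp (u n))) < eps.

Definition cvg (u : nat -> car U) (l : car U) : Prop :=
  forall eps, 0 < eps -> exists N, forall n, (N <= n)%nat ->
    vnorm (vadd (u n) (vopp l)) < eps.

Lemma cvg_ext u v l : (forall n, u n = v n) -> cvg u l -> cvg v l.
Proof.
  intros e hu eps heps. destruct (hu eps heps) as [N hN].
  exists N. intros n hn. rewrite <- e. exact (hN n hn).
Qed.

Lemma cvg_unique u l l' : cvg u l -> cvg u l' -> l = l'.
Proof.
  intros hl hl'. apply vsub_eq0, vnorm_approx0. intros eps heps.
  destruct (hl (eps / 2)) as [N hN]; [lra|].
  destruct (hl' (eps / 2)) as [N' hN']; [lra|].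
  specialize (hN (N + N')%nat ltac:(lia)). specialize (hN' (N + N')%nat ltac:(lia)).
  rewrite (vsub_split l (u (N + N')%nat)).
  pose proof (vnorm_triangle _ (vadd l (vopp (u (N + N')%nat)))
                (vadd (u (N + N')%nat) (vopp l'))).
  rewrite <- vnorm_opp, voppB in hN. lra.
Qed.

Lemma cvg_mull m u l : cvg u l -> cvg (fun n => vmul m (u n)) (vmul m l).
Proof.
  intros hl eps heps. pose proof (vnorm_ge0 _ m).
  destruct (hl (eps / (vnorm m + 1))) as [N hN].
  { apply Rdiv_lt_0_compat; lra. }
  exists N. intros n hn. rewrite <- vmulrN, <- vmulDr.
  eapply Rle_lt_trans; [apply vnorm_mul|].
  specialize (hN n hn). pose proof (vnorm_ge0 _ (vadd (u n) (vopp l))).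
  apply Rmult_lt_compat_l with (r := vnorm m + 1) in hN; [|lra].
  replace ((vnorm m + 1) * (eps / (vnorm m + 1))) with eps in hN by (field; lra).
  nra.
Qed.

Lemma cvg_mulr m u l : cvg u l -> cvg (fun n => vmul (u n) m) (vmul l m).
Proof.
  intros hl eps heps. pose proof (vnorm_ge0 _ m).
  destruct (hl (eps / (vnorm m + 1))) as [N hN].
  { apply Rdiv_lt_0_compat; lra. }
  exists N. intros n hn. rewrite <- vmulNr, <- vmulDl.
  eapply Rle_lt_trans; [apply vnorm_mul|].
  specialize (hN n hn). pose proof (vnorm_ge0 _ (vadd (u n) (vopp l))).
  apply Rmult_lt_compat_l with (r := vnorm m + 1) in hN; [|lra].
  replace ((vnorm m + 1) * (eps / (vnorm m + 1))) with eps in hN by (field; lra).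
  nra.
Qed.

Lemma cvg_one_sub u : cvg u vzero -> cvg (fun n => vadd vone (vopp (u n))) vone.
Proof.
  intros hu eps heps. destruct (hu eps heps) as [N hN]. exists N. intros n hn.
  rewrite vaddC, vaddA, vaddNl, vadd0l, vnorm_opp.
  specialize (hN n hn). rewrite vopp0, vadd0 in hN. exact hN.
Qed.

Fixpoint vpow y (k : nat) : car U :=
  match k with O => vone | S k => vmul y (vpow y k) end.

Fixpoint geom y (k : nat) : car U :=
  match k with O => vzero | S k => vadd (geom y k) (vpow y k) end.

Lemma vpow_comm y k : vmul (vpow y k) y = vmul y (vpow y k).
Proof.
  induction k as [|k IH]; simpl.
  - rewrite vmul1l, vmul1r; auto.
  - rewrite <- vmulA, IH; auto.
Qed.

Lemma vnorm_vpow y k : vnorm (vpow y k) <= vnorm y ^ k.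
Proof.
  induction k as [|k IH]; simpl.
  - rewrite vnorm_one; lra.
  - eapply Rle_trans; [apply vnorm_mul|].
    apply Rmult_le_compat_l; auto using vnorm_ge0.
Qed.

Lemma one_sub_mul_geom y k :
  vmul (vadd vone (vopp y)) (geom y k) = vadd vone (vopp (vpow y k)).
Proof.
  induction k as [|k IH]; simpl.
  - rewrite vmulr0, vaddN; auto.
  - rewrite vmulDr, IH, vmulDl, vmul1l, vmulNr, <- !vaddA. f_equal.
    rewrite vaddA, vaddNl, vadd0l; auto.
Qed.

Lemma geom_mul_one_sub y k :
  vmul (geom y k) (vadd vone (vopp y)) = vadd vone (vopp (vpow y k)).
Proof.
  induction k as [|k IH]; simpl.
  - rewrite vmul0r, vaddN; auto.
  - rewrite vmulDl, IH, vmulDr, vmul1r, vmulrN, vpow_comm, <- !vaddA. f_equal.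
    rewrite vaddA, vaddNl, vadd0l; auto.
Qed.

Section Contraction.
Variable y : car U.
Hypothesis hy : vnorm y < 1.

Lemma cvg_vpow : cvg (vpow y) vzero.
Proof.
  intros eps heps. pose proof (vnorm_ge0 _ y).
  destruct (pow_lt_1_zero (vnorm y) ltac:(rewrite Rabs_pos_eq; lra) eps heps) as [N hN].
  exists N. intros n hn. rewrite vopp0, vadd0.
  specialize (hN n hn). rewrite Rabs_pos_eq in hN by (apply pow_le; lra).
  pose proof (vnorm_vpow y n). lra.
Qed.

Lemma vnorm_geomB j n :
  vnorm (vadd (geom y (j + n)) (vopp (geom y n))) <=
  (vnorm y ^ n - vnorm y ^ (j + n)) / (1 - vnorm y).
Proof.
  induction j as [|j IH]; simpl.
  - rewrite vaddN, vnorm0. unfold Rdiv. rewrite Rminus_diag, Rmult_0_l; lra.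
  - rewrite <- vaddA, (vaddC _ (vpow y _)), vaddA.
    eapply Rle_trans; [apply vnorm_triangle|].
    pose proof (vnorm_vpow y (j + n)).
    replace ((vnorm y ^ n - vnorm y * vnorm y ^ (j + n)) / (1 - vnorm y))
      with ((vnorm y ^ n - vnorm y ^ (j + n)) / (1 - vnorm y) + vnorm y ^ (j + n))
      by (field; lra).
    lra.
Qed.

Lemma cauchy_geom : cauchy (geom y).
Proof.
  assert (hy0 : 0 <= vnorm y) by apply vnorm_ge0.
  assert (sub : forall m n, (n <= m)%nat ->
            vnorm (vadd (geom y m) (vopp (geom y n))) <= vnorm y ^ n / (1 - vnorm y)).
  { intros m n hnm. replace m with ((m - n) + n)%nat by lia.
    eapply Rle_trans; [apply vnorm_geomB|]. unfold Rdiv.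
    apply Rmult_le_compat_r; [apply Rlt_le, Rinv_0_lt_compat; lra|].
    pose proof (pow_le (vnorm y) (m - n + n) hy0). lra. }
  intros eps heps.
  destruct (pow_lt_1_zero (vnorm y) ltac:(rewrite Rabs_pos_eq; lra)
              (eps * (1 - vnorm y)) ltac:(nra)) as [N hN].
  assert (small : forall n, (N <= n)%nat -> vnorm y ^ n / (1 - vnorm y) < eps).
  { intros n hn. specialize (hN n hn). rewrite Rabs_pos_eq in hN by (apply pow_le; lra).
    apply Rmult_lt_reg_r with (r := 1 - vnorm y); [lra|].
    unfold Rdiv. rewrite Rmult_assoc, Rinv_l; lra. }
  exists N. intros m n hm hn. destruct (le_lt_dec n m) as [h|h].
  - eapply Rle_lt_trans; [apply sub; exact h | apply small; exact hn].
  - rewrite <- vnorm_opp, voppB.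
    eapply Rle_lt_trans; [apply sub; lia | apply small; exact hm].
Qed.

Lemma invertible_one_sub : invertible (vadd vone (vopp y)).
Proof.
  destruct (vcomplete U (geom y) cauchy_geom) as [l hl].
  pose proof (cvg_one_sub _ cvg_vpow) as h1.
  exists l. split.
  - apply (cvg_unique (fun k => vmul (vadd vone (vopp y)) (geom y k))).
    + exact (cvg_mull _ _ _ hl).
    + exact (cvg_ext _ _ _ (fun k => eq_sym (one_sub_mul_geom y k)) h1).
  - apply (cvg_unique (fun k => vmul (geom y k) (vadd vone (vopp y)))).
    + exact (cvg_mulr _ _ _ hl).
    + exact (cvg_ext _ _ _ (fun k => eq_sym (geom_mul_one_sub y k)) h1).
Qed.

End Contraction.
End Neumann.

Section Invertible.
Context {U : QBA}.
Implicit Types x y u : car U.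

Lemma invertible1 : invertible (@vone U).
Proof. exists vone; rewrite vmul1l; auto. Qed.

Lemma invertibleM x y : invertible x -> invertible y -> invertible (vmul x y).
Proof.
  intros [x' [h1 h2]] [y' [h3 h4]]. exists (vmul y' x'). split.
  - rewrite <- vmulA, (vmulA _ y), h3, vmul1l, h1; auto.
  - rewrite <- vmulA, (vmulA _ x'), h2, vmul1l, h4; auto.
Qed.

(* A right inverse [y c] of [x] and a left inverse [d y] of [x] must coincide. *)
Lemma invertible_of_mulC x y :
  invertible (vmul x y) -> invertible (vmul y x) -> invertible x.
Proof.
  intros [c [h1 _]] [d [_ h4]].
  assert (hr : vmul x (vmul y c) = vone) by (rewrite vmulA; auto).
  assert (hl : vmul (vmul d y) x = vone) by (rewrite <- vmulA; auto).
  assert (e : vmul d y = vmul y c).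
  { rewrite <- (vmul1r _ (vmul d y)), <- hr, vmulA, hl, vmul1l; auto. }
  exists (vmul y c). rewrite <- e in hr |- *. auto.
Qed.

Lemma invertible_lsc_real r x : r <> 0 -> invertible x -> invertible (lsc (Qreal r) x).
Proof.
  intros hr [x' [h1 h2]]. exists (lsc (Qreal (/ r)) x'). split.
  - rewrite <- lsc_vmul, vmul_lsc_real, h1, <- lsc_realM, Rinv_r by exact hr. apply lsc_one.
  - rewrite <- lsc_vmul, vmul_lsc_real, h2, <- lsc_realM, Rinv_l by exact hr. apply lsc_one.
Qed.

Lemma invertible_sum x : exists u1 u2, invertible u1 /\ invertible u2 /\ x = vadd u1 u2.
Proof.
  pose proof (vnorm_ge0 _ x) as hx.
  set (l := vnorm x + 1).
  set (y := lsc (Qreal (/ l)) x).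
  assert (hy : vnorm y < 1).
  { unfold y.
    rewrite vnorm_lsc_real, Rabs_pos_eq by (apply Rlt_le, Rinv_0_lt_compat; unfold l; lra).
    apply (Rmult_lt_reg_l l); [unfold l; lra|].
    rewrite <- Rmult_assoc, Rinv_r by (unfold l; lra). unfold l; lra. }
  exists (lsc (Qreal (- l)) (vadd vone (vopp y))), (lsc (Qreal l) vone).
  split; [|split].
  - apply invertible_lsc_real; [unfold l; lra|]. apply invertible_one_sub; exact hy.
  - apply invertible_lsc_real; [unfold l; lra|apply invertible1].
  - unfold y. rewrite lsc_addv, lscN, <- lsc_realM.
    replace (- l * / l) with (- (1)) by (field; unfold l; lra).
    rewrite <- vopp_lsc, voppK, lsc_realN, (vaddC _ (vopp _)), <- vaddA, vaddNl, vadd0.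
    auto.
Qed.

End Invertible.

Record ideal {U : QBA} (I : car U -> Prop) : Prop := {
  ideal0 : I vzero;
  idealD : forall x y, I x -> I y -> I (vadd x y);
  idealMl : forall x y, I y -> I (vmul x y);
  idealMr : forall x y, I x -> I (vmul x y)
}.

Definition quad {U : QBA} (s n : R) (v : car U) : car U :=
  vadd (vadd (vmul v v) (vopp (lsc (Qreal s) v))) (lsc (Qreal n) vone).

Lemma Rq_quad {U : QBA} q (v : car U) : Rq q v = quad (2 * Qre q) (Qnorm q ^ 2) v.
Proof. reflexivity. Qed.

Section Congruence.
Context {U : QBA} (I : car U -> Prop).
Hypothesis HI : ideal I.

Lemma ideal_lsc_real r x : I x -> I (lsc (Qreal r) x).
Proof. intro h. rewrite <- (vmul1l _ x), lsc_vmul. apply (idealMl _ HI); auto. Qed.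

Lemma idealN x : I x -> I (vopp x).
Proof. intro h. rewrite vopp_lsc. apply ideal_lsc_real; auto. Qed.

Definition eqmod x y := I (vadd x (vopp y)).

Lemma eqmod_refl x : eqmod x x.
Proof. unfold eqmod; rewrite vaddN; apply (ideal0 _ HI). Qed.

Lemma eqmod_sym x y : eqmod x y -> eqmod y x.
Proof. unfold eqmod; intro h. rewrite <- voppB. apply idealN; auto. Qed.

Lemma eqmod_trans x y z : eqmod x y -> eqmod y z -> eqmod x z.
Proof. unfold eqmod; intros h1 h2. rewrite (vsub_split x y z). apply (idealD _ HI); auto. Qed.

Add Parametric Relation : (car U) eqmod
  reflexivity proved by eqmod_refl
  symmetry proved by eqmod_sym
  transitivity proved by eqmod_trans
  as eqmod_rel.

Add Parametric Morphism : (@vadd U) with signature eqmod ==> eqmod ==> eqmod as vadd_eqmod.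
Proof.
  intros x x' h y y' h'. unfold eqmod in *.
  rewrite voppD, vaddACA. apply (idealD _ HI); auto.
Qed.

Add Parametric Morphism : (@vmul U) with signature eqmod ==> eqmod ==> eqmod as vmul_eqmod.
Proof.
  intros x x' h y y' h'. unfold eqmod in *.
  rewrite (vsub_split (vmul x y) (vmul x' y) (vmul x' y')).
  rewrite <- vmulNr, <- vmulDl, <- vmulrN, <- vmulDr.
  apply (idealD _ HI); [apply (idealMr _ HI) | apply (idealMl _ HI)]; auto.
Qed.

Add Parametric Morphism r : (@lsc U (Qreal r)) with signature eqmod ==> eqmod as lsc_eqmod.
Proof.
  intros x x' h. unfold eqmod in *. rewrite <- lscN, <- lsc_addv.
  apply ideal_lsc_real; auto.
Qed.

Add Parametric Morphism : (@vopp U) with signature eqmod ==> eqmod as vopp_eqmod.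
Proof. intros x x' h. unfold eqmod in *. rewrite <- voppD. apply idealN; auto. Qed.

Lemma eqmod0 x : I x -> eqmod x vzero.
Proof. unfold eqmod; rewrite vopp0, vadd0; auto. Qed.

Lemma eqmodP x y : eqmod x y -> exists k, I k /\ x = vadd y k.
Proof. intro h. exists (vadd x (vopp y)). split; auto. rewrite vaddC, vaddNK; auto. Qed.

(* Modulo [I], every monomial of [quad a * quad b] containing [ab] vanishes,
   leaving [n (a^2 + b^2 - s (a + b) + n)], and [n (a + b)^2 = n (a^2 + b^2)]
   since [ab + ba] lies in [I]. *)
Lemma quad_mul_eqmod s n a b :
  I (vmul a b) -> I (vmul b a) ->
  exists k, I k /\ vmul (quad s n a) (quad s n b) = vadd (lsc (Qreal n) (quad s n (vadd a b))) k.
Proof.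
  intros hab hba. apply eqmodP.
  assert (e1 : eqmod (vmul a b) vzero) by (apply eqmod0; auto).
  assert (e2 : eqmod (vmul b a) vzero) by (apply eqmod0; auto).
  assert (e3 : eqmod (vmul a (vmul b b)) vzero)
    by (apply eqmod0; rewrite vmulA; apply (idealMr _ HI); auto).
  unfold quad.
  rewrite !vmulDl, !vmulDr, !vmulNr, !vmulrN, <- !lsc_vmul, !vmul_lsc_real, !vmul1l, !vmul1r.
  rewrite <- !vmulA, e1, e2, e3.
  rewrite ?vmulr0, ?vmul0r, ?lsc_v0, ?vopp0, ?vadd0, ?vadd0l.
  rewrite <- !lsc_realM, (Rmult_comm s n).
  rewrite !lsc_addv, !lscN, !lsc_realM, !lsc_addv, !voppD, vaddA.
  rewrite (vaddACA (lsc (Qreal n) (vmul a a))).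
  reflexivity.
Qed.

End Congruence.

Section Homomorphism.
Context {V W : QBA} (A : car V -> car W).
Hypothesis hA : is_hom V W A.
Implicit Types x y k t u : car V.

Lemma hom_add x y : A (vadd x y) = vadd (A x) (A y).
Proof. apply hA. Qed.

Lemma hom_mul x y : A (vmul x y) = vmul (A x) (A y).
Proof. apply hA. Qed.

Lemma hom_lsc q x : A (lsc q x) = lsc q (A x).
Proof. apply hA. Qed.

Lemma hom_one : A vone = vone.
Proof. apply hA. Qed.

Lemma hom_zero : A vzero = vzero.
Proof. apply vadd_idem. rewrite <- hom_add, vadd0; auto. Qed.

Lemma Fredholm_invertible u : invertible u -> Fredholm A u.
Proof. intros [u' [h1 h2]]. exists (A u'). rewrite <- !hom_mul, h1, h2, hom_one; auto. Qed.

Lemma FredholmM x y : Fredholm A x -> Fredholm A y -> Fredholm A (vmul x y).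
Proof. unfold Fredholm; rewrite hom_mul; apply invertibleM. Qed.

Lemma Fredholm_of_mulC x y :
  Fredholm A (vmul x y) -> Fredholm A (vmul y x) -> Fredholm A x.
Proof. unfold Fredholm; rewrite !hom_mul; apply invertible_of_mulC. Qed.

Lemma Fredholm_lsc_real r x : r <> 0 -> Fredholm A (lsc (Qreal r) x) <-> Fredholm A x.
Proof.
  unfold Fredholm; rewrite hom_lsc. intro hr. split; intro h.
  - rewrite <- (lsc_realK r (A x) hr). apply invertible_lsc_real; auto.
    apply Rinv_neq_0_compat; exact hr.
  - apply invertible_lsc_real; auto.
Qed.

Lemma FredPert_mul_invertiblel p u : FredPert A p -> invertible u -> FredPert A (vmul u p).
Proof.
  intros h [u' [h1 h2]] t ht.
  replace (vadd (vmul u p) t) with (vmul u (vadd p (vmul u' t))).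
  - apply FredholmM; [apply Fredholm_invertible; exists u'; auto|].
    apply h, FredholmM; auto. apply Fredholm_invertible; exists u; auto.
  - rewrite vmulDr, vmulA, h1, vmul1l; auto.
Qed.

Lemma FredPert_mul_invertibler p u : FredPert A p -> invertible u -> FredPert A (vmul p u).
Proof.
  intros h [u' [h1 h2]] t ht.
  replace (vadd (vmul p u) t) with (vmul (vadd p (vmul t u')) u).
  - apply FredholmM; [|apply Fredholm_invertible; exists u'; auto].
    apply h, FredholmM; auto. apply Fredholm_invertible; exists u; auto.
  - rewrite vmulDl, <- vmulA, h2, vmul1r; auto.
Qed.

Lemma ideal_FredPert : ideal (FredPert A).
Proof.
  assert (hD : forall p p', FredPert A p -> FredPert A p' -> FredPert A (vadd p p')).
  { intros p p' h h' t ht. rewrite <- vaddA. apply h, h', ht. }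
  split; auto.
  - intros t ht. rewrite vadd0l; auto.
  - intros x p h. destruct (invertible_sum x) as [u1 [u2 [h1 [h2 ->]]]].
    rewrite vmulDl. apply hD; apply FredPert_mul_invertiblel; auto.
  - intros p x h. destruct (invertible_sum x) as [u1 [u2 [h1 [h2 ->]]]].
    rewrite vmulDr. apply hD; apply FredPert_mul_invertibler; auto.
Qed.

Lemma ideal_ker : ideal (fun k => A k = vzero).
Proof.
  split.
  - apply hom_zero.
  - intros x y hx hy. rewrite hom_add, hx, hy, vadd0; auto.
  - intros x y hy. rewrite hom_mul, hy, vmulr0; auto.
  - intros x y hx. rewrite hom_mul, hx, vmul0r; auto.
Qed.

Lemma FredPert_ker k : A k = vzero -> FredPert A k.
Proof. intros hk t ht. unfold Fredholm. rewrite hom_add, hk, vadd0l; auto. Qed.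

Lemma Weyl_Fredholm x : Weyl A x -> Fredholm A x.
Proof.
  intros [u [k [hu [hk ->]]]]. rewrite vaddC.
  apply FredPert_ker; [exact hk | apply Fredholm_invertible; exact hu].
Qed.

Lemma Weyl_add_ker x k : Weyl A x -> A k = vzero -> Weyl A (vadd x k).
Proof.
  intros [u [k' [hu [hk' ->]]]] hk. exists u, (vadd k' k).
  split; [exact hu | split; [apply (idealD _ ideal_ker); auto | apply eq_sym, vaddA]].
Qed.

Lemma WeylM x y : Weyl A x -> Weyl A y -> Weyl A (vmul x y).
Proof.
  intros [u [k [hu [hk ->]]]] [u' [k' [hu' [hk' ->]]]].
  exists (vmul u u'), (vadd (vmul u k') (vmul k (vadd u' k'))).
  split; [apply invertibleM; auto|split].
  - apply (idealD _ ideal_ker); [apply (idealMl _ ideal_ker) | apply (idealMr _ ideal_ker)]; auto.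
  - rewrite vmulDl, vmulDr, vaddA; auto.
Qed.

Lemma Weyl_lsc_real r x : r <> 0 -> Weyl A (lsc (Qreal r) x) <-> Weyl A x.
Proof.
  assert (hZ : forall r x, r <> 0 -> Weyl A x -> Weyl A (lsc (Qreal r) x)).
  { intros r' x' hr [u [k [hu [hk ->]]]]. exists (lsc (Qreal r') u), (lsc (Qreal r') k).
    split; [apply invertible_lsc_real; auto | split; [|apply lsc_addv]].
    apply (ideal_lsc_real _ ideal_ker); auto. }
  intro hr. split; [|apply hZ; exact hr].
  intro h. rewrite <- (lsc_realK r x hr). apply hZ; auto.
  apply Rinv_neq_0_compat; exact hr.
Qed.

Lemma Weyl_of_mul_invertiblel u y : invertible u -> Weyl A (vmul u y) -> Weyl A y.
Proof.
  intros [u' [h1 h2]] [v [k [hv [hk e]]]].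
  exists (vmul u' v), (vmul u' k). split; [|split].
  - apply invertibleM; auto. exists u; auto.
  - apply (idealMl _ ideal_ker); auto.
  - rewrite <- vmulDr, <- e, vmulA, h2, vmul1l; auto.
Qed.

Section Quadratic.
Variables (s n : R) (a b : car V).
Hypothesis hn : n <> 0.

Lemma Fredholm_quad_add :
  FredPert A (vmul a b) -> FredPert A (vmul b a) ->
  Fredholm A (quad s n (vadd a b)) <-> Fredholm A (quad s n a) /\ Fredholm A (quad s n b).
Proof.
  intros hab hba.
  destruct (quad_mul_eqmod _ ideal_FredPert s n a b hab hba) as [k1 [hk1 e1]].
  destruct (quad_mul_eqmod _ ideal_FredPert s n b a hba hab) as [k2 [hk2 e2]].
  rewrite (vaddC _ b a) in e2.
  rewrite <- (Fredholm_lsc_real n _ hn). split.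
  - intro h.
    assert (f1 : Fredholm A (vmul (quad s n a) (quad s n b))) by (rewrite e1, vaddC; auto).
    assert (f2 : Fredholm A (vmul (quad s n b) (quad s n a))) by (rewrite e2, vaddC; auto).
    split; eapply Fredholm_of_mulC; eauto.
  - intros [ha hb]. rewrite <- (vaddK (lsc _ _) k1), <- e1, vaddC.
    apply (idealN _ ideal_FredPert); auto. apply FredholmM; auto.
Qed.

Lemma Weyl_quad_add :
  A (vmul a b) = vzero -> A (vmul b a) = vzero ->
  Weyl A (quad s n a) -> Weyl A (quad s n b) -> Weyl A (quad s n (vadd a b)).
Proof.
  intros hab hba ha hb.
  destruct (quad_mul_eqmod _ ideal_ker s n a b hab hba) as [k [hk e]].
  rewrite <- (Weyl_lsc_real n _ hn), <- (vaddK (lsc _ _) k), <- e.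
  apply Weyl_add_ker; [apply WeylM; auto | apply (idealN _ ideal_ker); auto].
Qed.

(* Writing [quad a = u + k] with [u] invertible, [u (quad b)] differs from the
   Weyl element [quad a * quad b] by [k (quad b)], which lies in the kernel. *)
Lemma Weyl_quad_addr :
  A (vmul a b) = vzero -> A (vmul b a) = vzero ->
  Weyl A (quad s n (vadd a b)) -> Weyl A (quad s n a) -> Weyl A (quad s n b).
Proof.
  intros hab hba h [u [k [hu [hk ea]]]].
  destruct (quad_mul_eqmod _ ideal_ker s n a b hab hba) as [k1 [hk1 e1]].
  assert (hw : Weyl A (vmul (quad s n a) (quad s n b))).
  { rewrite e1. apply Weyl_add_ker; auto. apply Weyl_lsc_real; auto. }
  apply (Weyl_of_mul_invertiblel u); auto.
  rewrite ea, vmulDl in hw. rewrite <- (vaddK (vmul u _) (vmul k (quad s n b))).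
  apply Weyl_add_ker; auto.
  apply (idealN _ ideal_ker), (idealMr _ ideal_ker); auto.
Qed.

End Quadratic.
End Homomorphism.

Theorem mainTheorem1 (V W : QBA)
  (hV : @vone V <> @vzero V) (hW : @vone W <> @vzero W)
  (A : car V -> car W) (hA : is_hom V W A) (a b : car V) :
  ((FredPert A (vmul a b) /\ FredPert A (vmul b a)) ->
     forall q, q <> Qzero ->
       (fred_spec A (vadd a b) q <-> fred_spec A a q \/ fred_spec A b q))
  /\
  ((A (vmul a b) = vzero /\ A (vmul b a) = vzero) ->
     (forall q, q <> Qzero ->
        weyl_spec A (vadd a b) q -> weyl_spec A a q \/ weyl_spec A b q)
     /\
     ((forall q, weyl_spec A a q <-> fred_spec A a q) ->
        forall q, q <> Qzero ->
          (weyl_spec A (vadd a b) q <-> weyl_spec A a q \/ weyl_spec A b q))).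
Proof.
  unfold fred_spec, weyl_spec. split.
  - intros [hab hba] q hq. rewrite !Rq_quad.
    rewrite (Fredholm_quad_add A hA _ _ a b (Qnorm_sqr_neq0 q hq) hab hba).
    split; [apply not_and_or | tauto].
  - intros [hab hba].
    assert (sub : forall q, q <> Qzero ->
              ~ Weyl A (Rq q (vadd a b)) -> ~ Weyl A (Rq q a) \/ ~ Weyl A (Rq q b)).
    { intros q hq h. apply not_and_or. intros [ha hb]. apply h. rewrite !Rq_quad in *.
      apply Weyl_quad_add; auto using Qnorm_sqr_neq0. }
    split; [exact sub|]. intros hspec q hq. split; [apply sub; exact hq|].
    intros hnot h. rewrite !Rq_quad in *.
    pose proof (Qnorm_sqr_neq0 q hq) as hn.
    assert (hFa : Fredholm A (quad (2 * Qre q) (Qnorm q ^ 2) a)).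
    { apply (Fredholm_quad_add A hA _ _ a b hn); auto using FredPert_ker, Weyl_Fredholm. }
    assert (hWa : Weyl A (quad (2 * Qre q) (Qnorm q ^ 2) a)).
    { apply NNPP. intro hw. apply (proj1 (hspec q) hw), hFa. }
    assert (hWb : Weyl A (quad (2 * Qre q) (Qnorm q ^ 2) b))
      by (apply (Weyl_quad_addr A hA _ _ a b hn); auto).
    destruct hnot; contradiction.
Qed.
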